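(* Let $G$ be a finite simple graph, $k\ge 2$, and let $e=\{a,b\}$ be an edge of $G$. Suppose that for every $k$-matching $\{e_1,\ldots,e_k\}$ of $G-e$ there exist a vertex $c\notin\{a,b\}$ with $\{c,a\}\in E(G)$ or $\{c,b\}\in E(G)$, and an index $j$ with $c\in e_j$ and $e_1\cdots \widehat{e_j}\cdots e_k\in I(G-\{a,b\})^{[k-1]}$. Then the ideal $L(G,e,k):=I(G-e)^{[k]}\cap (ab)\,I(G-\{a,b\})^{[k-1]}$ is generated in degree $2k+1$, i.e. all its minimal monomial generators have degree $2k+1$.
   Context: $G$ is a finite simple graph on vertex set $\{x_1,\ldots,x_n\}$ identified with the variables of $S=K[x_1,\ldots,x_n]$ ($K$ a field); edges are identified with degree-2 monomials. For a graph $H$, $I(H)^{[k]}$ is the ideal generated by all products $e_1\cdots e_k$ over $k$-matchings of $H$. $G-e$ is the graph on the same vertex set as $G$ with the edge $e$ removed; $G-\{a,b\}$ is the induced subgraph on $V(G)\setminus\{a,b\}$. The hat denotes omission of a factor. *)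

(* Monomial ideals of S = K[x_v : v in T] are encoded
   combinatorially through their monomials (exponent vectors). *)
From mathcomp Require Import all_boot.
Set Implicit Arguments. Unset Strict Implicit. Unset Printing Implicit Defensive.

Section Defs.
Variable T : finType.

Definition monomial := {ffun T -> nat}.

Definition mdvd (u w : monomial) : bool := [forall v, u v <= w v].
Definition mmul (u w : monomial) : monomial := [ffun v => u v + w v].
Definition mdeg (u : monomial) : nat := \sum_v u v.

Definition simple_graph (E : {set {set T}}) : Prop := forall f, f \in E -> #|f| = 2.

Definition matching (E M : {set {set T}}) : bool :=
  (M \subset E) &&
  [forall e1 in M, forall e2 in M, (e1 != e2) ==> [disjoint e1 & e2]].

(* the monomial e_1 ... e_r of a set of edges (squarefree for a matching) *)
Definition edge_mono (M : {set {set T}}) : monomial :=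
  [ffun v => #|[set f in M | v \in f]|].

(* the monomial u lies in I(H)^[k], H with edge set E *)
Definition in_matching_ideal (E : {set {set T}}) (k : nat) (u : monomial) : bool :=
  [exists M : {set {set T}}, [&& matching E M, #|M| == k & mdvd (edge_mono M) u]].

Definition del_edge (E : {set {set T}}) (e : {set T}) := E :\ e.
(* G - {a,b} : induced subgraph on V \ {a,b}; its edges are those avoiding a,b *)
Definition del_verts (E : {set {set T}}) (a b : T) :=
  [set f in E | (a \notin f) && (b \notin f)].

(* u lies in (ab) I(G - {a,b})^[k-1] *)
Definition in_ab_ideal (E : {set {set T}}) (a b : T) (k : nat) (u : monomial) : bool :=
  [exists M : {set {set T}},
     [&& matching (del_verts E a b) M, #|M| == k.-1 &
         mdvd (mmul (edge_mono [set [set a; b]]) (edge_mono M)) u]].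

(* monomials of L(G,e,k) = I(G-e)^[k] ∩ (ab) I(G-{a,b})^[k-1]
   (the intersection of monomial ideals is spanned by the common monomials) *)
Definition in_L (E : {set {set T}}) (a b : T) (k : nat) (u : monomial) : bool :=
  in_matching_ideal (del_edge E [set a; b]) k u && in_ab_ideal E a b k u.

Definition min_mono_gen (P : monomial -> bool) (u : monomial) : Prop :=
  P u /\ forall w, mdvd w u -> w != u -> ~~ P w.

End Defs.

From mathcomp Require Import all_boot.

(* Let u be a minimal generator of L(G,e,k), with u in I(G-e)^[k] through a
   k-matching M.  The hypothesis yields c adjacent to some x in {a,b}, an edge
   f of M through c, and a (k-1)-matching N of G-{a,b} with
   e_N | e_(M\f).  Both monomials have degree 2(k-1), so e_N = e_(M\f); hence
   M\f avoids a, b and (being disjoint from f) c.  The monomial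
   w = x_a x_b x_c e_(M\f) of degree 2k+1 then divides u (which is divisible
   by x_a x_b and by e_M, and c lies on f), lies in
   I(G-e)^[k] through (M\f) + {c,x} and in (ab) I(G-{a,b})^[k-1] through N,
   so w = u by minimality. *)

Set Implicit Arguments.
Unset Strict Implicit.
Unset Printing Implicit Defensive.

Section Monomials.
Variable T : finType.
Implicit Types (u w y z : monomial T) (A B : {set T}) (E M N : {set {set T}}).

Definition set_mono A : monomial T := [ffun v => (v \in A : nat)].

Lemma mdvdP u w : reflect (forall v, u v <= w v) (mdvd u w).
Proof. exact: forallP. Qed.

Lemma mdvd_refl u : mdvd u u.
Proof. exact/mdvdP. Qed.

Lemma mdvd_trans w u y : mdvd u w -> mdvd w y -> mdvd u y.
Proof. by move=> /mdvdP uw /mdvdP wy; apply/mdvdP => v; apply: leq_trans (wy v). Qed.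

Lemma mdvd_mmul u w y z : mdvd u w -> mdvd y z -> mdvd (mmul u y) (mmul w z).
Proof. by move=> /mdvdP uw /mdvdP yz; apply/mdvdP => v; rewrite !ffunE leq_add. Qed.

Lemma mdvd_mmulr u w : mdvd u (mmul u w).
Proof. by apply/mdvdP => v; rewrite ffunE leq_addr. Qed.

Lemma mdeg_mmul u w : mdeg (mmul u w) = mdeg u + mdeg w.
Proof. by rewrite /mdeg -big_split; apply: eq_bigr => v _; rewrite ffunE. Qed.

Lemma eq_mdvd_mdeg u w : mdvd u w -> mdeg w <= mdeg u -> u = w.
Proof.
move=> /mdvdP uw; have := leqif_sum (fun v (_ : predT v) => leqif_eq (uw v)).
by move/geq_leqif => -> /forallP eq_uw; apply/ffunP => v; apply/eqP/eq_uw.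
Qed.

Lemma mdeg_set_mono A : mdeg (set_mono A) = #|A|.
Proof.
rewrite /mdeg -sum1_card [RHS]big_mkcond /=.
by apply: eq_bigr => v _; rewrite ffunE; case: (v \in A).
Qed.

Lemma mdvd_set_mono A B : A \subset B -> mdvd (set_mono A) (set_mono B).
Proof.
move=> /subsetP sAB; apply/mdvdP => v; rewrite !ffunE.
by case: (boolP (v \in A)) => // /sAB ->.
Qed.

Lemma mdvd_set_mono_gt0 A u v : mdvd (set_mono A) u -> v \in A -> 0 < u v.
Proof. by move=> /mdvdP/(_ v) + vA; rewrite ffunE vA. Qed.

Lemma edge_monoE M v : edge_mono M v = \sum_(f in M) (v \in f).
Proof.
rewrite ffunE -sum1_card big_mkcond [RHS]big_mkcond /=.
by apply: eq_bigr => f _; rewrite inE; case: (f \in M); case: (v \in f).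
Qed.

Lemma edge_mono1 f : edge_mono [set f] = set_mono f.
Proof. by apply/ffunP => v; rewrite edge_monoE big_set1 ffunE. Qed.

Lemma edge_mono_setU1 f M :
  f \notin M -> edge_mono (f |: M) = mmul (set_mono f) (edge_mono M).
Proof.
by move=> fM; apply/ffunP => v; rewrite [RHS]ffunE !edge_monoE big_setU1 // ffunE.
Qed.

Lemma edge_mono_eq0P M v : reflect {in M, forall f : {set T}, v \notin f} (edge_mono M v == 0).
Proof.
rewrite edge_monoE sum_nat_eq0.
by apply: (iffP forall_inP) => avoid f /avoid; rewrite eqb0.
Qed.

Lemma mdvd_edge_monoS M N : M \subset N -> mdvd (edge_mono M) (edge_mono N).
Proof.
move=> /subsetP sMN; apply/mdvdP => v; rewrite !ffunE; apply: subset_leq_card.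
by apply/subsetP => f; rewrite !inE => /andP[/sMN -> ->].
Qed.

Lemma mdeg_edge_mono M : mdeg (edge_mono M) = \sum_(f in M) #|f|.
Proof.
rewrite /mdeg; under eq_bigr => v _ do rewrite edge_monoE.
rewrite exchange_big; apply: eq_bigr => f _.
by rewrite -mdeg_set_mono; apply: eq_bigr => v _; rewrite ffunE.
Qed.

Lemma mdeg_edge_mono_simple E M :
  simple_graph E -> M \subset E -> mdeg (edge_mono M) = 2 * #|M|.
Proof.
move=> sgE /subsetP sME; rewrite mdeg_edge_mono mulnC -sum_nat_const.
by apply: eq_bigr => f /sME /sgE.
Qed.

End Monomials.

Section Matchings.
Variables (T : finType) (E : {set {set T}}).
Implicit Types (M N : {set {set T}}) (f g : {set T}).

Lemma del_edge_sub f : del_edge E f \subset E.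
Proof. exact: subD1set. Qed.

Lemma del_verts_sub a b : del_verts E a b \subset E.
Proof. by apply/subsetP => f; rewrite inE => /andP[]. Qed.

Lemma matching_sub M : matching E M -> M \subset E.
Proof. by case/andP. Qed.

Lemma matching_disjoint M :
  matching E M -> {in M &, forall f g, f != g -> [disjoint f & g]}.
Proof.
by case/andP=> _ /forall_inP disjM f g fM gM; move: (disjM f fM) => /forall_inP/(_ g gM)/implyP.
Qed.

Lemma matchingS M N : N \subset M -> matching E M -> matching E N.
Proof.
move=> /subsetP sNM mM; apply/andP; split.
  by apply/subsetP => f /sNM; apply/subsetP/matching_sub.
apply/forall_inP => f fN; apply/forall_inP => g gN; apply/implyP.
exact: matching_disjoint mM _ _ (sNM f fN) (sNM g gN).
Qed.

Lemma matching_setU1 M g :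
  g \in E -> {in M, forall f, [disjoint g & f]} -> matching E M -> matching E (g |: M).
Proof.
move=> gE disj_g mM; apply/andP; split.
  by rewrite subUset sub1set gE matching_sub.
apply/forall_inP => f1 /setU1P[-> | f1M]; apply/forall_inP => f2 /setU1P[-> | f2M];
  apply/implyP => neq12.
- by rewrite eqxx in neq12.
- exact: disj_g.
- by rewrite disjoint_sym disj_g.
- exact: matching_disjoint mM _ _ f1M f2M neq12.
Qed.

End Matchings.

Section Witness.
Variables (T : finType) (E : {set {set T}}) (a b c x : T) (k : nat).
Variables (M N : {set {set T}}) (f : {set T}).
Hypotheses (sgE : simple_graph E) (k_gt0 : 0 < k) (a_neq_b : a != b).
Hypotheses (c_notin_ab : c \notin [set a; b]) (x_in_ab : x \in [set a; b]).
Hypothesis cxE : [set c; x] \in E.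
Hypotheses (mM : matching (del_edge E [set a; b]) M) (cardM : #|M| = k).
Hypotheses (fM : f \in M) (cf : c \in f).
Hypotheses (mN : matching (del_verts E a b) N) (cardN : #|N| = k.-1).
Hypothesis dvdN : mdvd (edge_mono N) (edge_mono (M :\ f)).

Let w := mmul (set_mono [set a; b; c]) (edge_mono (M :\ f)).

Lemma card_matching_D1 : #|M :\ f| = k.-1.
Proof. by rewrite -cardM (cardsD1 f M) fM. Qed.

Lemma matching_D1_sub : M :\ f \subset E.
Proof.
exact: subset_trans (subD1set M f) (subset_trans (matching_sub mM) (del_edge_sub _ _)).
Qed.

Lemma edge_mono_matching_D1 : edge_mono N = edge_mono (M :\ f).
Proof.
have sNE : N \subset E := subset_trans (matching_sub mN) (del_verts_sub _ _ _).
apply: eq_mdvd_mdeg dvdN _.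
by rewrite !(mdeg_edge_mono_simple sgE) ?matching_D1_sub // card_matching_D1 cardN.
Qed.

Lemma edge_mono_matching_D1_eq0 v : v \in [set a; b; c] -> edge_mono (M :\ f) v = 0.
Proof.
rewrite in_setU => /orP[v_ab | /set1P->]; apply/eqP.
  rewrite -edge_mono_matching_D1; apply/edge_mono_eq0P => g /(subsetP (matching_sub mN)).
  by rewrite inE => /and3P[_ a_notin_g b_notin_g]; case/set2P: v_ab => ->.
apply/edge_mono_eq0P => g /setD1P[g_neq_f gM].
have disj_fg : [disjoint f & g] by apply: matching_disjoint mM _ _ fM gM _; rewrite eq_sym.
by rewrite (disjointFr disj_fg cf).
Qed.

Lemma in_L_witness : in_L E a b k w.
Proof.
have abc_c : c \in [set a; b; c] by rewrite !inE eqxx orbT.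
have abc_x : x \in [set a; b; c] by rewrite inE x_in_ab.
have /eqP/edge_mono_eq0P Mf_c := edge_mono_matching_D1_eq0 abc_c.
have /eqP/edge_mono_eq0P Mf_x := edge_mono_matching_D1_eq0 abc_x.
have cx_notin_Mf : [set c; x] \notin M :\ f by apply/negP => /Mf_c; rewrite set21.
apply/andP; split; apply/existsP.
- exists ([set c; x] |: (M :\ f)).
  rewrite cardsU1 cx_notin_Mf card_matching_D1 add1n prednK // eqxx /=.
  apply/andP; split.
    apply: matching_setU1; last exact: matchingS (subD1set M f) mM.
      rewrite /del_edge in_setD1 cxE andbT.
      by apply/eqP => cx_ab; move: c_notin_ab; rewrite -cx_ab set21.
    move=> g gMf; rewrite disjoints_subset; apply/subsetP => y.
    by rewrite !inE => /orP[] /eqP->; [apply: Mf_c | apply: Mf_x].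
  rewrite edge_mono_setU1 //; apply: mdvd_mmul (mdvd_refl _); apply: mdvd_set_mono.
  by rewrite subUset !sub1set abc_c abc_x.
- exists N; rewrite mN cardN eqxx edge_mono1 edge_mono_matching_D1 /=.
  exact/mdvd_mmul/mdvd_refl/mdvd_set_mono/subsetUl.
Qed.

Lemma mdeg_witness : mdeg w = 2 * k + 1.
Proof.
rewrite mdeg_mmul mdeg_set_mono (mdeg_edge_mono_simple sgE matching_D1_sub) card_matching_D1.
rewrite setUC cardsU1 c_notin_ab cards2 a_neq_b -[in RHS](prednK k_gt0).
by rewrite mulnSr addnC -addnA.
Qed.

Lemma witness_mdvd u : mdvd (edge_mono M) u -> 0 < u a -> 0 < u b -> mdvd w u.
Proof.
move=> /mdvdP dvdMu ua ub; apply/mdvdP => v; rewrite ffunE [set_mono _ _]ffunE.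
have [v_abc | v_abc] := boolP (v \in [set a; b; c]).
  rewrite edge_mono_matching_D1_eq0 // addn0.
  move: v_abc; rewrite in_setU => /orP[/set2P[]-> // | /set1P->].
  apply: leq_trans (dvdMu c); rewrite lt0n.
  by apply/edge_mono_eq0P => /(_ f fM); rewrite cf.
by rewrite add0n; apply: leq_trans (dvdMu v); apply/mdvdP/mdvd_edge_monoS/subD1set.
Qed.

End Witness.

Theorem lemma4p2 (T : finType) (E : {set {set T}}) (k : nat) (a b : T) :
  simple_graph E -> 2 <= k -> a != b -> [set a; b] \in E ->
  (forall M : {set {set T}},
     matching (del_edge E [set a; b]) M -> #|M| = k ->
     exists c : T, [/\ c \notin [set a; b],
       ([set c; a] \in E) || ([set c; b] \in E) &
       exists2 f, f \in M /\ c \in f &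
         in_matching_ideal (del_verts E a b) k.-1 (edge_mono (M :\ f))]) ->
  forall u : monomial T, min_mono_gen (in_L E a b k) u -> mdeg u = 2 * k + 1.
Proof.
move=> sgE k_ge2 a_neq_b _ hyp u [uL u_min].
have k_gt0 : 0 < k := ltnW k_ge2.
case/andP: uL => /existsP[M /and3P[mM /eqP cardM dvdMu]] /existsP[N0 /and3P[_ _ dvd_abu]].
have ab_u := mdvd_trans (mdvd_mmulr _ _) dvd_abu; rewrite edge_mono1 in ab_u.
have ua := mdvd_set_mono_gt0 ab_u (set21 a b).
have ub := mdvd_set_mono_gt0 ab_u (set22 a b).
have [c [c_notin_ab c_adj [f [fM cf] /existsP[N /and3P[mN /eqP cardN dvdN]]]]] := hyp M mM cardM.
have [x x_in_ab cxE] : exists2 x, x \in [set a; b] & [set c; x] \in E.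
  by case/orP: c_adj; [exists a | exists b]; rewrite // !inE eqxx ?orbT.
have w_dvd_u := witness_mdvd sgE mM cardM fM cf mN cardN dvdN dvdMu ua ub.
have wL := in_L_witness sgE k_gt0 c_notin_ab x_in_ab cxE mM cardM fM cf mN cardN dvdN.
have <- : mmul (set_mono [set a; b; c]) (edge_mono (M :\ f)) = u.
  by apply/eqP; apply: contraTT wL => /(u_min _ w_dvd_u).
exact: mdeg_witness sgE k_gt0 a_neq_b c_notin_ab mM cardM fM.
Qed.
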